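(* For every $n\ge1$ and every choice of coefficients there exist a real polynomial $P$ of degree at most $2n+1$ and a real polynomial $Q$ of degree at most $[\frac{n-1}{2}]$ such that for all $u\in(0,+\infty)$, $$M(u^4+u^2)=u\,P(u)+(u^4+u^2)\,Q(u^4+u^2)\int_0^{1/\sqrt{1+u^2}}\sqrt{1-t^2}\,dt.$$
   Context: Fix an integer $n\ge 1$ and real coefficients $a^k_{i,j},b^k_{i,j}$ ($k=1,2,3,4$; $i+j\le n$), $f_k=\sum_{0\le i+j\le n}a^k_{i,j}x^iy^j$, $g_k=\sum_{0\le i+j\le n}b^k_{i,j}x^iy^j$. For $h>0$ let $u(h)=\sqrt{(\sqrt{1+4h}-1)/2}$ (the unique positive number with $u^4+u^2=h$), $\Gamma_h$ the circle $x^2+y^2=h$, and $A=(u,u^2)$, $B=(u,-u^2)$, $C=(-u,-u^2)$, $D=(-u,u^2)$. Let $\widehat{AB},\widehat{BC},\widehat{CD},\widehat{DA}$ be the arcs of $\Gamma_h$ traversed clockwise from $A$ to $B$ (through $(\sqrt h,0)$), $B$ to $C$ (through $(0,-\sqrt h)$), $C$ to $D$ (through $(-\sqrt h,0)$), $D$ to $A$ (through $(0,\sqrt h)$). Define $$M(h)=\int_{\widehat{AB}}g_1dx-f_1dy+\int_{\widehat{BC}}g_2dx-f_2dy+\int_{\widehat{CD}}g_3dx-f_3dy+\int_{\widehat{DA}}g_4dx-f_4dy,\quad h>0.$$ $[p]$ is the integer part of $p$. *)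

From Stdlib Require Import Reals Lra ClassicalEpsilon.
Open Scope R_scope.

(* Oriented Riemann integral int_a^b f (a > b allowed, as in Stdlib's RiemannInt);
   defined as the value of RiemannInt whenever f is Riemann integrable
   (RiemannInt does not depend on the integrability proof). *)
Definition RInt (f : R -> R) (a b : R) : R :=
  epsilon (inhabits 0) (fun I => exists pr : Riemann_integrable f a b, RiemannInt pr = I).

Definition poly2 (c : nat -> nat -> R) (n : nat) (x y : R) : R :=
  sum_f_R0 (fun i => sum_f_R0 (fun j => c i j * x ^ i * y ^ j) (n - i)) n.

Definition poly1 (p : nat -> R) (d : nat) (t : R) : R :=
  sum_f_R0 (fun k => p k * t ^ k) d.

(* u(h): the unique positive number with u^4 + u^2 = h *)
Definition uh (h : R) : R := sqrt ((sqrt (1 + 4 * h) - 1) / 2).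

(* Line integral of  g dx - f dy  along the circle x^2+y^2=h parametrized by
   theta |-> (sqrt h cos theta, sqrt h sin theta), from angle th0 to angle th1. *)
Definition circ_int (f g : R -> R -> R) (h th0 th1 : R) : R :=
  RInt (fun th =>
          g (sqrt h * cos th) (sqrt h * sin th) * (- sqrt h * sin th)
        - f (sqrt h * cos th) (sqrt h * sin th) * (sqrt h * cos th)) th0 th1.

(* a k i j = a^k_{i,j}, b k i j = b^k_{i,j}, k = 1..4.
   A=(u,u^2) is at angle al = atan u; B at -al; C at al - PI (== -PI - ... ); D at PI - al.
   Clockwise = decreasing angle:
   AB : al -> -al          (through angle 0)
   BC : -al -> al - PI     (through -PI/2)
   CD : al - PI -> -PI - al (through -PI), ending at D (angle -PI-al == PI-al mod 2PI)
   DA : PI - al -> al      (through PI/2) *)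
Definition Mfun (n : nat) (a b : nat -> nat -> nat -> R) (h : R) : R :=
  let al := atan (uh h) in
  let f k := poly2 (a k) n in
  let g k := poly2 (b k) n in
  circ_int (f 1%nat) (g 1%nat) h al (- al)
  + circ_int (f 2%nat) (g 2%nat) h (- al) (al - PI)
  + circ_int (f 3%nat) (g 3%nat) h (al - PI) (- PI - al)
  + circ_int (f 4%nat) (g 4%nat) h (PI - al) al.

(* Parametrize h = u^4 + u^2 (u > 0), so that the circle has radius r = rad u
   and its corner A = (u, u^2) has angle atan u.  In the angle variable x an
   arc integral of g dx - f dy is the integral of a combination of monomials
   r^(p+q) cos^p x sin^q x with 1 <= p + q <= n + 1. *)

From Pilot Require Import Defs.
From Stdlib Require Import Reals Lra Lia ClassicalEpsilon.
From Coquelicot Require Import Coquelicot.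
Open Scope R_scope.

Definition is_poly (N : nat) (P : R -> R) : Prop :=
  exists p, forall t, P t = poly1 p N t.

Lemma is_poly_ext N P Q : (forall t, P t = Q t) -> is_poly N P -> is_poly N Q.
Proof. intros E [p Hp]; exists p; intros t; rewrite <- E; auto. Qed.

Lemma is_poly_zero N : is_poly N (fun _ => 0).
Proof.
  exists (fun _ => 0); intros t; unfold poly1.
  symmetry; apply sum_eq_R0; intros; ring.
Qed.

Lemma is_poly_add N P Q : is_poly N P -> is_poly N Q -> is_poly N (fun t => P t + Q t).
Proof.
  intros [p Hp] [q Hq]; exists (fun k => p k + q k); intros t; rewrite Hp, Hq.
  unfold poly1; rewrite <- plus_sum; apply sum_eq; intros; ring.
Qed.

Lemma is_poly_scal N c P : is_poly N P -> is_poly N (fun t => c * P t).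
Proof.
  intros [p Hp]; exists (fun k => c * p k); intros t; rewrite Hp.
  unfold poly1; rewrite scal_sum; apply sum_eq; intros; ring.
Qed.

Lemma is_poly_weaken N M P : (N <= M)%nat -> is_poly N P -> is_poly M P.
Proof.
  intros HNM; induction HNM as [|M _ IH]; auto.
  intros HP; destruct (IH HP) as [p Hp].
  exists (fun k => if Nat.eqb k (S M) then 0 else p k); intros t; rewrite Hp.
  unfold poly1; rewrite tech5, Nat.eqb_refl, Rmult_0_l, Rplus_0_r.
  apply sum_eq; intros i Hi.
  destruct (Nat.eqb_spec i (S M)); [lia | reflexivity].
Qed.

Lemma is_poly_mul_x N P : is_poly N P -> is_poly (S N) (fun t => t * P t).
Proof.
  intros [p Hp]; exists (fun k => match k with O => 0 | S k' => p k' end).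
  intros t; rewrite Hp; unfold poly1.
  rewrite (decomp_sum _ (S N)) by lia; simpl pred.
  rewrite scal_sum; simpl; rewrite Rmult_0_l, Rplus_0_l.
  apply sum_eq; intros; simpl; ring.
Qed.

Lemma is_poly_mul_pow k N P : is_poly N P -> is_poly (k + N) (fun t => t ^ k * P t).
Proof.
  intros HP; induction k as [|k IH]; simpl.
  - apply (is_poly_ext _ P); auto; intros; ring.
  - apply (is_poly_ext _ (fun t => t * (t ^ k * P t))); [intros; ring|].
    apply is_poly_mul_x, IH.
Qed.

Lemma is_poly_monomial c k N : (k <= N)%nat -> is_poly N (fun t => c * t ^ k).
Proof.
  intros Hk; apply is_poly_weaken with (k + 0)%nat; [lia|].
  apply (is_poly_ext _ (fun t => t ^ k * c)); [intros; ring|].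
  apply is_poly_mul_pow; exists (fun _ => c); intros t; unfold poly1; simpl; ring.
Qed.

Lemma poly1_at_0 p N : poly1 p N 0 = p 0%nat.
Proof. unfold poly1; induction N as [|N IH]; simpl; [ring | rewrite IH; ring]. Qed.

Lemma is_poly_divide_x D G : is_poly (S D) G -> G 0 = 0 ->
  exists Q, is_poly D Q /\ forall t, G t = t * Q t.
Proof.
  intros [p Hp] HG0; rewrite Hp, poly1_at_0 in HG0.
  exists (poly1 (fun k => p (S k)) D); split; [exists (fun k => p (S k)); reflexivity|].
  intros t; rewrite Hp; unfold poly1.
  rewrite (decomp_sum _ (S D)) by lia; simpl pred.
  rewrite HG0, scal_sum; simpl; rewrite Rmult_0_l, Rplus_0_l.
  apply sum_eq; intros; simpl; ring.
Qed.

(* Throughout, h = u^4 + u^2 is the level of the circle through (u, u^2), and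
   J u is the closed form of int_0^(1/sqrt(1+u^2)) sqrt(1-t^2) dt. *)
Definition J (u : R) : R := (PI / 2 - atan u) / 2 + u / (2 * (1 + u ^ 2)).

(* [jform N D F]: for u > 0, F u = u P(u) + G(h) J(u) with deg P <= N,
   deg G <= D and G(0) = 0; this is the shape of the theorem's right-hand side. *)
Definition jform (N D : nat) (F : R -> R) : Prop :=
  exists P G, is_poly N P /\ is_poly D G /\ G 0 = 0 /\
    forall u, 0 < u -> F u = u * P u + G (u ^ 4 + u ^ 2) * J u.

Lemma jform_ext N D F F' : (forall u, 0 < u -> F u = F' u) -> jform N D F -> jform N D F'.
Proof.
  intros E (P & G & HP & HG & HG0 & H); exists P, G; repeat split; auto.
  intros u Hu; rewrite <- E; auto.
Qed.

Lemma jform_add N D F F' : jform N D F -> jform N D F' -> jform N D (fun u => F u + F' u).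
Proof.
  intros (P & G & HP & HG & HG0 & H) (P' & G' & HP' & HG' & HG0' & H').
  exists (fun t => P t + P' t), (fun t => G t + G' t); repeat split.
  - apply is_poly_add; auto.
  - apply is_poly_add; auto.
  - rewrite HG0, HG0'; ring.
  - intros u Hu; rewrite H, H'; auto; ring.
Qed.

Lemma jform_scal N D c F : jform N D F -> jform N D (fun u => c * F u).
Proof.
  intros (P & G & HP & HG & HG0 & H).
  exists (fun t => c * P t), (fun t => c * G t); repeat split.
  - apply is_poly_scal; auto.
  - apply is_poly_scal; auto.
  - rewrite HG0; ring.
  - intros u Hu; rewrite H; auto; ring.
Qed.

Lemma jform_weaken N D N' D' F : (N <= N')%nat -> (D <= D')%nat ->
  jform N D F -> jform N' D' F.
Proof.
  intros HN HD (P & G & HP & HG & HG0 & H); exists P, G; repeat split; auto.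
  - apply is_poly_weaken with N; auto.
  - apply is_poly_weaken with D; auto.
Qed.

Lemma jform_mul_h N D F : jform N D F -> jform (N + 4) (S D) (fun u => (u ^ 4 + u ^ 2) * F u).
Proof.
  intros (P & G & HP & HG & HG0 & H).
  exists (fun t => t ^ 4 * P t + t ^ 2 * P t), (fun t => t * G t); repeat split.
  - apply is_poly_add.
    + rewrite Nat.add_comm; apply is_poly_mul_pow; auto.
    + apply is_poly_weaken with (2 + N)%nat; [lia|]; apply is_poly_mul_pow; auto.
  - apply is_poly_mul_x; auto.
  - ring.
  - intros u Hu; rewrite H; auto; ring.
Qed.

Lemma jform_monomial N D c k : (1 <= k <= S N)%nat -> jform N D (fun u => c * u ^ k).
Proof.
  intros Hk; exists (fun t => c * t ^ (k - 1)), (fun _ => 0); repeat split.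
  - apply is_poly_monomial; lia.
  - apply is_poly_zero.
  - intros u _; replace k with (S (k - 1)) at 1 by lia; simpl; ring.
Qed.

Definition rad (u : R) : R := sqrt (u ^ 4 + u ^ 2).

Lemma rad_sq u : rad u ^ 2 = u ^ 4 + u ^ 2.
Proof.
  unfold rad; apply pow2_sqrt; pose proof (pow2_ge_0 u); nra.
Qed.

Definition endpoint (phi : R -> R) : Prop :=
  exists s t, forall u, 0 < u ->
    rad u * cos (phi u) = s * u /\ rad u * sin (phi u) = t * u ^ 2.

Lemma endpoint_monomial phi a b : endpoint phi -> exists k, forall u, 0 < u ->
  rad u ^ (a + b) * (cos (phi u) ^ a * sin (phi u) ^ b) = k * u ^ (a + 2 * b).
Proof.
  intros (s & t & H); exists (s ^ a * t ^ b); intros u Hu.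
  destruct (H u Hu) as [Hc Hs].
  replace (rad u ^ (a + b) * (cos (phi u) ^ a * sin (phi u) ^ b))
    with ((rad u * cos (phi u)) ^ a * (rad u * sin (phi u)) ^ b)
    by (rewrite pow_add, !Rpow_mult_distr; ring).
  rewrite Hc, Hs, !Rpow_mult_distr, pow_add, pow_mult; ring.
Qed.

Lemma jform_endpoint_diff phi0 phi1 N D a b :
  endpoint phi0 -> endpoint phi1 -> (1 <= a + b)%nat -> (a + 2 * b <= S N)%nat ->
  jform N D (fun u => rad u ^ (a + b) *
    (cos (phi1 u) ^ a * sin (phi1 u) ^ b - cos (phi0 u) ^ a * sin (phi0 u) ^ b)).
Proof.
  intros E0 E1 Hab HN.
  destruct (endpoint_monomial _ a b E0) as [k0 Hk0].
  destruct (endpoint_monomial _ a b E1) as [k1 Hk1].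
  apply jform_ext with (fun u => k1 * u ^ (a + 2 * b) + (- k0) * u ^ (a + 2 * b)).
  - intros u Hu; rewrite <- Ropp_mult_distr_l, <- (Hk0 u Hu), <- (Hk1 u Hu); ring.
  - apply jform_add; apply jform_monomial; lia.
Qed.

Definition arc (phi0 phi1 : R -> R) : Prop :=
  endpoint phi0 /\ endpoint phi1 /\
  jform 3 1 (fun u => (u ^ 4 + u ^ 2) * (phi1 u - phi0 u)).

Lemma is_derive_eq (f : R -> R) (x l l' : R) : is_derive f x l -> l = l' -> is_derive f x l'.
Proof. intros H <-; exact H. Qed.

Lemma INR_succ_neq_0 m : INR m + 1 <> 0.
Proof. pose proof (pos_INR m); lra. Qed.

(* [auto_derive] writes the coefficient m + 1 of d(c^(m+1)) = (m+1) c^m dc in this form. *)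
Lemma INR_succ_match m : match m with 0%nat => 1 | S _ => INR m + 1 end = INR m + 1.
Proof. destruct m; [simpl; ring | reflexivity]. Qed.

Lemma derive_cos_sin p q x : is_derive (fun x => cos x ^ S p * sin x ^ S q) x
  (- (INR p + 1) * (cos x ^ p * sin x ^ S (S q)) + (INR q + 1) * (cos x ^ S (S p) * sin x ^ q)).
Proof. auto_derive; auto; rewrite !INR_succ_match; simpl; ring. Qed.

Definition arc_prim (phi0 phi1 : R -> R) (p q : nat) : Prop :=
  exists A, (forall x, is_derive A x (cos x ^ p * sin x ^ q)) /\
    jform (2 * (p + q) - 1) ((p + q) / 2)
      (fun u => rad u ^ (p + q) * (A (phi1 u) - A (phi0 u))).

Section ReductionFormulas.

Variables phi0 phi1 : R -> R.
Hypothesis E0 : endpoint phi0.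
Hypothesis E1 : endpoint phi1.

Lemma arc_prim_sin1 p : arc_prim phi0 phi1 p 1.
Proof.
  set (c := -1 / (INR p + 1)).
  exists (fun x => c * (cos x ^ S p * sin x ^ 0)); split.
  - intros x; eapply is_derive_eq; [auto_derive; auto|].
    unfold c; rewrite INR_succ_match; field; apply INR_succ_neq_0.
  - apply jform_ext with (fun u => c * (rad u ^ (S p + 0) *
      (cos (phi1 u) ^ S p * sin (phi1 u) ^ 0 - cos (phi0 u) ^ S p * sin (phi0 u) ^ 0))).
    + intros u _; rewrite Nat.add_0_r, Nat.add_1_r; ring.
    + apply jform_scal, jform_endpoint_diff; auto; lia.
Qed.

(* (p+1) int cos^p sin^(q+2) = (q+1) int cos^(p+2) sin^q - cos^(p+1) sin^(q+1). *)
Lemma arc_prim_sin_step p q : arc_prim phi0 phi1 (S (S p)) q -> arc_prim phi0 phi1 p (S (S q)).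
Proof.
  intros (A & HA & HJ).
  set (a := (INR q + 1) / (INR p + 1)); set (b := -1 / (INR p + 1)).
  exists (fun x => a * A x + b * (cos x ^ S p * sin x ^ S q)); split.
  - intros x; eapply is_derive_eq.
    + apply (is_derive_plus (fun x => a * A x) (fun x => b * (cos x ^ S p * sin x ^ S q)));
        apply is_derive_scal; [apply HA | apply derive_cos_sin].
    + unfold plus, a, b; simpl; field; apply INR_succ_neq_0.
  - replace (p + S (S q))%nat with (S (S p) + q)%nat by lia.
    apply jform_ext with (fun u => a * (rad u ^ (S (S p) + q) * (A (phi1 u) - A (phi0 u)))
      + b * (rad u ^ (S p + S q) * (cos (phi1 u) ^ S p * sin (phi1 u) ^ S q
                                    - cos (phi0 u) ^ S p * sin (phi0 u) ^ S q))).
    + intros u _; replace (S p + S q)%nat with (S (S p) + q)%nat by lia; ring.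
    + apply jform_add; apply jform_scal; auto.
      apply jform_endpoint_diff; auto; lia.
Qed.

Lemma arc_prim_cos1 : arc_prim phi0 phi1 1 0.
Proof.
  exists sin; split.
  - intros x; eapply is_derive_eq; [auto_derive; auto | simpl; ring].
  - apply jform_ext with (fun u => rad u ^ (0 + 1) *
      (cos (phi1 u) ^ 0 * sin (phi1 u) ^ 1 - cos (phi0 u) ^ 0 * sin (phi0 u) ^ 1)).
    + intros u _; simpl; ring.
    + apply jform_endpoint_diff; auto; lia.
Qed.

(* (m+2) int cos^(m+2) = (m+1) int cos^m + cos^(m+1) sin; the factor r^(m+2)
   of the new term is h r^m, whence the hypothesis on h r^m (A(phi1) - A(phi0)). *)
Lemma arc_prim_cos_step m A : (forall x, is_derive A x (cos x ^ m * sin x ^ 0)) ->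
  jform (2 * S (S m) - 1) (S (S m) / 2)
    (fun u => (u ^ 4 + u ^ 2) * (rad u ^ m * (A (phi1 u) - A (phi0 u)))) ->
  arc_prim phi0 phi1 (S (S m)) 0.
Proof.
  intros HA HJ.
  assert (Hm : INR m + 2 <> 0) by (pose proof (pos_INR m); lra).
  set (a := (INR m + 1) / (INR m + 2)); set (b := 1 / (INR m + 2)).
  exists (fun x => a * A x + b * (cos x ^ S m * sin x ^ 1)); split.
  - intros x; eapply is_derive_eq.
    + apply (is_derive_plus (fun x => a * A x) (fun x => b * (cos x ^ S m * sin x ^ 1)));
        apply is_derive_scal; [apply HA | apply (derive_cos_sin m 0)].
    + pose proof (sin2_cos2 x) as Hpyth; unfold Rsqr in Hpyth.
      unfold plus, a, b; simpl; replace (sin x * (sin x * 1)) with (1 - cos x * cos x) by lra.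
      field; auto.
  - rewrite Nat.add_0_r.
    apply jform_ext with (fun u => a * ((u ^ 4 + u ^ 2) * (rad u ^ m * (A (phi1 u) - A (phi0 u))))
      + b * (rad u ^ (S m + 1) * (cos (phi1 u) ^ S m * sin (phi1 u) ^ 1
                                  - cos (phi0 u) ^ S m * sin (phi0 u) ^ 1))).
    + intros u _; rewrite <- rad_sq, Nat.add_1_r; simpl; ring.
    + apply jform_add; apply jform_scal; auto.
      apply jform_endpoint_diff; auto; lia.
Qed.

End ReductionFormulas.

Lemma half_plus_2 m : ((m + 2) / 2 = S (m / 2))%nat.
Proof. replace (m + 2)%nat with (m + 1 * 2)%nat by lia; rewrite Nat.div_add; lia. Qed.

(* All the powers cos^p sin^0, p >= 1, by steps of two; for p = 2 the
   antiderivative of cos^0 is the angle itself, which is where the arc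
   hypothesis on h (phi1 - phi0) enters. *)
Lemma arc_prim_cos phi0 phi1 p : arc phi0 phi1 -> (1 <= p)%nat -> arc_prim phi0 phi1 p 0.
Proof.
  intros (E0 & E1 & Hangle).
  induction p as [| |m IH] using MyNat.ind_0_1_SS; intros Hp; [lia | apply arc_prim_cos1; auto|].
  destruct m as [|m].
  - apply arc_prim_cos_step with (fun x => x); auto.
    + intros x; eapply is_derive_eq; [auto_derive; auto | simpl; ring].
    + apply jform_ext with (2 := Hangle); intros u _; simpl; ring.
  - destruct (IH ltac:(lia)) as (A & HA & HJ).
    apply arc_prim_cos_step with A; auto.
    rewrite Nat.add_0_r in HJ; apply jform_mul_h in HJ.
    apply jform_weaken with (2 * S m - 1 + 4)%nat (S (S m / 2)); auto.
    + lia.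
    + replace (S (S (S m))) with (S m + 2)%nat by lia; rewrite half_plus_2; lia.
Qed.

Lemma arc_prim_all phi0 phi1 p q : arc phi0 phi1 -> (1 <= p + q)%nat -> arc_prim phi0 phi1 p q.
Proof.
  intros Harc; pose proof Harc as (E0 & E1 & _).
  revert p; induction q as [| |q IH] using MyNat.ind_0_1_SS; intros p Hpq.
  - apply arc_prim_cos; auto; lia.
  - apply arc_prim_sin1; auto.
  - apply arc_prim_sin_step; auto; apply IH; lia.
Qed.

Lemma RInt_antiderivative (f A : R -> R) a b :
  (forall x, Rmin a b <= x <= Rmax a b -> is_derive A x (f x)) ->
  (forall x, Rmin a b <= x <= Rmax a b -> continuous f x) ->
  Defs.RInt f a b = A b - A a.
Proof.
  intros HD HC.
  assert (H : is_RInt f a b (minus (A b) (A a))) by (apply (is_RInt_derive A f); auto).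
  assert (pr : Riemann_integrable f a b) by (apply ex_RInt_Reals_0; eexists; eauto).
  unfold Defs.RInt.
  destruct (epsilon_spec (inhabits 0)
              (fun I => exists pr : Riemann_integrable f a b, RiemannInt pr = I))
    as [pr' <-]; [exists (RiemannInt pr), pr; reflexivity|].
  rewrite <- (is_RInt_unique _ _ _ _ (ex_RInt_Reals_aux_1 f a b pr')).
  apply is_RInt_unique; exact H.
Qed.

Definition arc_exact (n : nat) (phi0 phi1 : R -> R) (Phi : R -> R -> R) : Prop :=
  exists A : R -> R -> R, (forall u x, is_derive (A u) x (Phi u x)) /\
    (forall u x, continuous (Phi u) x) /\
    jform (2 * n + 1) ((n + 1) / 2) (fun u => A u (phi1 u) - A u (phi0 u)).

Lemma arc_exact_ext n phi0 phi1 Phi Psi : (forall u x, Phi u x = Psi u x) ->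
  arc_exact n phi0 phi1 Phi -> arc_exact n phi0 phi1 Psi.
Proof.
  intros E (A & HD & HC & HJ); exists A; split; [|split]; auto.
  - intros u x; rewrite <- E; auto.
  - intros u x; apply (continuous_ext (Phi u)); auto.
Qed.

Lemma arc_exact_add n phi0 phi1 Phi Psi : arc_exact n phi0 phi1 Phi -> arc_exact n phi0 phi1 Psi ->
  arc_exact n phi0 phi1 (fun u x => Phi u x + Psi u x).
Proof.
  intros (A & HD & HC & HJ) (B & HD' & HC' & HJ').
  exists (fun u x => A u x + B u x); split; [|split].
  - intros u x; apply (is_derive_plus (A u) (B u)); auto.
  - intros u x; apply (continuous_plus (Phi u) (Psi u)); auto.
  - apply jform_ext with (fun u => (A u (phi1 u) - A u (phi0 u)) + (B u (phi1 u) - B u (phi0 u)));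
      [intros; ring | apply jform_add; auto].
Qed.

Lemma arc_exact_scal n phi0 phi1 c Phi : arc_exact n phi0 phi1 Phi ->
  arc_exact n phi0 phi1 (fun u x => c * Phi u x).
Proof.
  intros (A & HD & HC & HJ); exists (fun u x => c * A u x); split; [|split].
  - intros u x; apply (is_derive_scal (A u)); auto.
  - intros u x; apply (continuous_scal_r c (Phi u)); auto.
  - apply jform_ext with (fun u => c * (A u (phi1 u) - A u (phi0 u)));
      [intros; ring | apply jform_scal; auto].
Qed.

Lemma arc_exact_sum n phi0 phi1 (F : nat -> R -> R -> R) m :
  (forall i, (i <= m)%nat -> arc_exact n phi0 phi1 (F i)) ->
  arc_exact n phi0 phi1 (fun u x => sum_f_R0 (fun i => F i u x) m).
Proof.
  induction m as [|m IH]; intros H; simpl; [apply H; lia|].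
  apply arc_exact_add; auto.
Qed.

Lemma arc_exact_monomial n phi0 phi1 k p q : arc phi0 phi1 -> (1 <= p + q <= n + 1)%nat ->
  arc_exact n phi0 phi1 (fun u x => k * (rad u ^ (p + q) * (cos x ^ p * sin x ^ q))).
Proof.
  intros Harc Hd.
  destruct (arc_prim_all phi0 phi1 p q Harc ltac:(lia)) as (A & HA & HJ).
  exists (fun u x => k * (rad u ^ (p + q) * A x)); split; [|split].
  - intros u x; apply (is_derive_scal (fun x => rad u ^ (p + q) * A x)), is_derive_scal, HA.
  - intros u x; apply (@ex_derive_continuous R_AbsRing R_NormedModule); auto_derive; auto.
  - apply jform_weaken with (2 * (p + q) - 1)%nat ((p + q) / 2)%nat;
      [lia | apply Nat.Div0.div_le_mono; lia|].
    apply jform_ext with (fun u => k * (rad u ^ (p + q) * (A (phi1 u) - A (phi0 u))));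
      [intros; ring | apply jform_scal; auto].
Qed.

(* The integrand of an arc integral with f = poly2 c n is
   - f(r cos x, r sin x) r cos x (and similarly with sin for g): after expanding
   poly2 it is a sum of building blocks of total degree i + j + 1 <= n + 1. *)
Lemma arc_exact_poly2 n phi0 phi1 (c : nat -> nat -> R) e1 e2 :
  arc phi0 phi1 -> (e1 + e2 = 1)%nat ->
  arc_exact n phi0 phi1 (fun u x => poly2 c n (rad u * cos x) (rad u * sin x) *
                                     (rad u * (cos x ^ e1 * sin x ^ e2))).
Proof.
  intros Harc He.
  apply arc_exact_ext with (fun u x => sum_f_R0 (fun i => sum_f_R0 (fun j =>
     c i j * (rad u ^ ((i + e1) + (j + e2)) * (cos x ^ (i + e1) * sin x ^ (j + e2))))
     (n - i)) n).
  - intros u x; unfold poly2; rewrite Rmult_comm, scal_sum; apply sum_eq; intros i Hi.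
    rewrite Rmult_comm, scal_sum; apply sum_eq; intros j Hj.
    replace ((i + e1) + (j + e2))%nat with (i + j + 1)%nat by lia.
    rewrite !pow_add, !Rpow_mult_distr; simpl; ring.
  - apply arc_exact_sum; intros i Hi; apply arc_exact_sum; intros j Hj.
    apply arc_exact_monomial; auto; lia.
Qed.

Lemma arc_integral n (ca cb : nat -> nat -> R) phi0 phi1 : arc phi0 phi1 ->
  exists A : R -> R -> R,
    jform (2 * n + 1) ((n + 1) / 2) (fun u => A u (phi1 u) - A u (phi0 u)) /\
    forall u t0 t1, circ_int (poly2 ca n) (poly2 cb n) (u ^ 4 + u ^ 2) t0 t1 = A u t1 - A u t0.
Proof.
  intros Harc.
  assert (Hex : arc_exact n phi0 phi1 (fun u x =>
     poly2 cb n (rad u * cos x) (rad u * sin x) * (- rad u * sin x)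
   - poly2 ca n (rad u * cos x) (rad u * sin x) * (rad u * cos x))).
  { apply arc_exact_ext with (fun u x =>
      (-1) * (poly2 cb n (rad u * cos x) (rad u * sin x) * (rad u * (cos x ^ 0 * sin x ^ 1)))
      + (-1) * (poly2 ca n (rad u * cos x) (rad u * sin x) * (rad u * (cos x ^ 1 * sin x ^ 0)))).
    - intros u x; simpl; ring.
    - apply arc_exact_add; apply arc_exact_scal; apply arc_exact_poly2; auto. }
  destruct Hex as (A & HD & HC & HJ); exists A; split; auto.
  intros u t0 t1; apply RInt_antiderivative; intros; [apply HD | apply HC].
Qed.

(* h times an angle of the form c atan u + d PI has the form u P(u) + G(h) J(u),
   because h atan u = h PI / 2 - 2 h J(u) + u^3. *)
Lemma jform_h_angle c d : jform 3 1 (fun u => (u ^ 4 + u ^ 2) * (c * atan u + d * PI)).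
Proof.
  set (e := (c / 2 + d) * PI).
  exists (fun t => e * t ^ 3 + (e * t ^ 1 + c * t ^ 2)), (fun t => (-2 * c) * t ^ 1).
  split; [|split; [|split]].
  - apply is_poly_add; [|apply is_poly_add]; apply is_poly_monomial; lia.
  - apply is_poly_monomial; lia.
  - ring.
  - intros u Hu; unfold J, e; pose proof (pow2_ge_0 u); field; lra.
Qed.

Lemma arc_of_angles phi0 phi1 c d : endpoint phi0 -> endpoint phi1 ->
  (forall u, 0 < u -> phi1 u - phi0 u = c * atan u + d * PI) -> arc phi0 phi1.
Proof.
  intros E0 E1 Hangle; split; [|split]; auto.
  apply jform_ext with (2 := jform_h_angle c d); intros u Hu; rewrite Hangle; auto.
Qed.

Lemma endpoint_sym phi (f : R -> R) c d :
  (forall x, cos (f x) = c * cos x /\ sin (f x) = d * sin x) ->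
  endpoint phi -> endpoint (fun u => f (phi u)).
Proof.
  intros Hf (s & t & H); exists (c * s), (d * t); intros u Hu.
  destruct (Hf (phi u)) as [Hc Hs]; destruct (H u Hu) as [Hx Hy].
  rewrite Hc, Hs; split; [rewrite Rmult_assoc, <- Hx | rewrite Rmult_assoc, <- Hy]; ring.
Qed.

Lemma sqrt_1_plus_sq_pos u : 0 < sqrt (1 + u ^ 2).
Proof. apply sqrt_lt_R0; pose proof (pow2_ge_0 u); lra. Qed.

Lemma sqrt_1_plus_sq_sq u : sqrt (1 + u ^ 2) * sqrt (1 + u ^ 2) = 1 + u ^ 2.
Proof. apply sqrt_sqrt; pose proof (pow2_ge_0 u); lra. Qed.

Lemma uh_level u : 0 < u -> uh (u ^ 4 + u ^ 2) = u.
Proof.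
  intros Hu; unfold uh.
  replace (1 + 4 * (u ^ 4 + u ^ 2)) with ((2 * u ^ 2 + 1) ^ 2) by ring.
  rewrite sqrt_pow2 by (pose proof (pow2_ge_0 u); lra).
  replace ((2 * u ^ 2 + 1 - 1) / 2) with (u ^ 2) by field.
  apply sqrt_pow2; lra.
Qed.

Lemma rad_eq u : 0 < u -> rad u = u * sqrt (1 + u ^ 2).
Proof.
  intros Hu; unfold rad; replace (u ^ 4 + u ^ 2) with (u ^ 2 * (1 + u ^ 2)) by ring.
  rewrite sqrt_mult by (pose proof (pow2_ge_0 u); lra); rewrite sqrt_pow2; lra.
Qed.

(* The angle of the corner A = (u, u^2), as it appears in [Mfun]. *)
Definition corner (u : R) : R := atan (uh (u ^ 4 + u ^ 2)).

Lemma endpoint_corner : endpoint corner.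
Proof.
  exists 1, 1; intros u Hu; unfold corner.
  rewrite uh_level, rad_eq, cos_atan, sin_atan by auto.
  replace (1 + u²) with (1 + u ^ 2) by (unfold Rsqr; ring).
  pose proof (sqrt_1_plus_sq_pos u); split; field; lra.
Qed.

(* The other corners B, C, D are images of A under symmetries of the circle;
   D is reached at angle PI - atan u counterclockwise, -PI - atan u clockwise. *)
Lemma endpoint_B : endpoint (fun u => - corner u).
Proof.
  apply (endpoint_sym corner (fun x => - x) 1 (-1)); [|exact endpoint_corner].
  intros x; rewrite cos_neg, sin_neg; split; ring.
Qed.

Lemma endpoint_C : endpoint (fun u => corner u - PI).
Proof.
  apply (endpoint_sym corner (fun x => x - PI) (-1) (-1)); [|exact endpoint_corner].
  intros x; rewrite cos_minus, sin_minus, cos_PI, sin_PI; split; ring.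
Qed.

Lemma endpoint_D : endpoint (fun u => PI - corner u).
Proof.
  apply (endpoint_sym corner (fun x => PI - x) (-1) 1); [|exact endpoint_corner].
  intros x; rewrite cos_minus, sin_minus, cos_PI, sin_PI; split; ring.
Qed.

Lemma endpoint_D_clockwise : endpoint (fun u => - PI - corner u).
Proof.
  apply (endpoint_sym corner (fun x => - PI - x) (-1) 1); [|exact endpoint_corner].
  intros x; replace (- PI - x) with (- (x + PI)) by ring.
  rewrite cos_neg, sin_neg, neg_cos, neg_sin; split; ring.
Qed.

Lemma arc_AB : arc corner (fun u => - corner u).
Proof.
  apply arc_of_angles with (-2) 0; [exact endpoint_corner | exact endpoint_B|].
  intros u Hu; unfold corner; rewrite uh_level by auto; ring.
Qed.

Lemma arc_BC : arc (fun u => - corner u) (fun u => corner u - PI).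
Proof.
  apply arc_of_angles with 2 (-1); [exact endpoint_B | exact endpoint_C|].
  intros u Hu; unfold corner; rewrite uh_level by auto; ring.
Qed.

Lemma arc_CD : arc (fun u => corner u - PI) (fun u => - PI - corner u).
Proof.
  apply arc_of_angles with (-2) 0; [exact endpoint_C | exact endpoint_D_clockwise|].
  intros u Hu; unfold corner; rewrite uh_level by auto; ring.
Qed.

Lemma arc_DA : arc (fun u => PI - corner u) corner.
Proof.
  apply arc_of_angles with 2 (-1); [exact endpoint_D | exact endpoint_corner|].
  intros u Hu; unfold corner; rewrite uh_level by auto; ring.
Qed.

Lemma is_derive_asin x : -1 < x < 1 -> is_derive asin x (1 / sqrt (1 - x²)).
Proof.
  intros Hx; apply is_derive_Reals.
  generalize (derive_pt_asin x Hx); unfold derive_pt.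
  destruct (derivable_pt_asin x Hx) as [l Hl]; simpl; intros <-; exact Hl.
Qed.

Lemma derive_disc_area x : -1 < x < 1 ->
  is_derive (fun t => / 2 * (asin t + t * sqrt (1 - t ^ 2))) x (sqrt (1 - x ^ 2)).
Proof.
  intros Hx; assert (Hx2 : 0 < 1 - x ^ 2) by nra.
  eapply is_derive_eq.
  - apply (is_derive_scal (fun t => asin t + t * sqrt (1 - t ^ 2))).
    apply (is_derive_plus asin (fun t => t * sqrt (1 - t ^ 2))).
    + apply is_derive_asin, Hx.
    + auto_derive; [lra | reflexivity].
  - pose proof (sqrt_lt_R0 _ Hx2) as Hpos.
    pose proof (sqrt_sqrt _ (Rlt_le _ _ Hx2)) as Hsq.
    replace (1 - x²) with (1 - x ^ 2) by (unfold Rsqr; ring).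
    replace (1 + - (x * (x * 1))) with (1 - x ^ 2) by ring.
    unfold plus; simpl; replace (1 - x * (x * 1)) with (1 - x ^ 2) by ring.
    set (S := sqrt (1 - x ^ 2)) in *.
    transitivity ((1 - x ^ 2 + S * S) / (2 * S)); [field; lra|].
    rewrite <- Hsq; field; lra.
Qed.

(* 1 / sqrt(1 + u^2) is the cosine of atan u, i.e. the sine of PI/2 - atan u. *)
Lemma asin_inv_sqrt u : 0 < u -> asin (1 / sqrt (1 + u ^ 2)) = PI / 2 - atan u.
Proof.
  intros Hu.
  replace (1 / sqrt (1 + u ^ 2)) with (cos (atan u))
    by (rewrite cos_atan; unfold Rsqr; do 3 f_equal; ring).
  rewrite <- sin_shift, asin_sin; [reflexivity|].
  pose proof (atan_bound u); pose proof (atan_increasing 0 u Hu); rewrite atan_0 in *; lra.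
Qed.

Lemma RInt_disc_area u : 0 < u ->
  Defs.RInt (fun t => sqrt (1 - t ^ 2)) 0 (1 / sqrt (1 + u ^ 2)) = J u.
Proof.
  intros Hu; pose proof (sqrt_1_plus_sq_pos u) as Hs0; pose proof (sqrt_1_plus_sq_sq u) as Hss.
  set (s := sqrt (1 + u ^ 2)) in *.
  assert (Hs1 : 1 < s) by (assert (0 < u ^ 2) by (apply pow_lt; auto); nra).
  assert (Hbound : 0 < 1 / s < 1).
  { split; [apply Rdiv_lt_0_compat; lra|].
    apply (Rmult_lt_reg_r s); [lra|]; field_simplify; lra. }
  assert (Hint : forall x, Rmin 0 (1 / s) <= x <= Rmax 0 (1 / s) -> -1 < x < 1)
    by (intros x; rewrite Rmin_left, Rmax_right; lra).
  rewrite (RInt_antiderivative _ (fun t => / 2 * (asin t + t * sqrt (1 - t ^ 2)))).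
  - assert (E : 1 - (1 / s) ^ 2 = (u / s) ^ 2).
    { replace (1 - (1 / s) ^ 2) with ((s * s - 1) / (s * s)) by (field; lra).
      replace ((u / s) ^ 2) with (u ^ 2 / (s * s)) by (field; lra).
      rewrite Hss; field; pose proof (pow2_ge_0 u); lra. }
    rewrite E, sqrt_pow2 by (apply Rlt_le, Rdiv_lt_0_compat; lra).
    unfold s; rewrite asin_inv_sqrt, asin_0 by auto; fold s.
    unfold J; replace (1 / s * (u / s)) with (u / (s * s)) by (field; lra).
    rewrite Hss; field; pose proof (pow2_ge_0 u); lra.
  - intros x Hx; apply derive_disc_area, Hint, Hx.
  - intros x Hx; specialize (Hint x Hx).
    apply (@ex_derive_continuous R_AbsRing R_NormedModule); auto_derive; nra.
Qed.

(* Sum the four arc contributions, then read G(h) = h Q(h) and J = the area integral. *)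
Theorem mainTheorem9 (n : nat) (Hn : (1 <= n)%nat) (a b : nat -> nat -> nat -> R) :
  exists (p q : nat -> R),
    forall u : R, 0 < u ->
      Mfun n a b (u ^ 4 + u ^ 2)
      = u * poly1 p (2 * n + 1) u
        + (u ^ 4 + u ^ 2) * poly1 q ((n - 1) / 2) (u ^ 4 + u ^ 2)
          * Defs.RInt (fun t => sqrt (1 - t ^ 2)) 0 (1 / sqrt (1 + u ^ 2)).
Proof.
  destruct (arc_integral n (a 1%nat) (b 1%nat) _ _ arc_AB) as (A1 & J1 & E1).
  destruct (arc_integral n (a 2%nat) (b 2%nat) _ _ arc_BC) as (A2 & J2 & E2).
  destruct (arc_integral n (a 3%nat) (b 3%nat) _ _ arc_CD) as (A3 & J3 & E3).
  destruct (arc_integral n (a 4%nat) (b 4%nat) _ _ arc_DA) as (A4 & J4 & E4).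
  destruct (jform_add _ _ _ _ (jform_add _ _ _ _ (jform_add _ _ _ _ J1 J2) J3) J4)
    as (P & G & [p Hp] & HG & HG0 & Hsum).
  replace ((n + 1) / 2)%nat with (S ((n - 1) / 2)) in HG
    by (rewrite <- half_plus_2; f_equal; lia).
  destruct (is_poly_divide_x _ _ HG HG0) as (Q & [q Hq] & HGQ).
  exists p, q; intros u Hu.
  unfold Mfun; rewrite E1, E2, E3, E4, RInt_disc_area, <- Hp, <- Hq, <- HGQ by auto.
  rewrite <- Hsum by auto; reflexivity.
Qed.
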